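(* The $\sigma$-algebra $\mathcal{M}$ of $\mu$-measurable subsets of $\mathbb{R}_{>0}$ coincides with the $\sigma$-algebra of Lebesgue measurable subsets of $\mathbb{R}_{>0}$, and for every $E\in\mathcal{M}$, $$\mu(E)=\exp\Big(\int_E\frac{dx}{x}\Big)$$ (with the convention $\exp(+\infty)=+\infty$).
   Context: $\mathbb{R}_{>0}=(0,\infty)$ carries the usual topology. For a closed interval $I=[a,b]$ with $0<a<b<\infty$, set $\ell(I)=b\cdot a^{-1}$. A cover of a set $E\subseteq\mathbb{R}_{>0}$ is a countable collection $S$ of closed intervals $[a,b]$ with $0<a<b<\infty$ such that $E\subseteq\bigcup_{I\in S}I$; set $\nu(S)=\prod_{I\in S}\ell(I)\in[1,+\infty]$ (a product of factors $\ge1$, equal to the supremum of its finite partial products, independent of ordering). The exterior measure of $E\subseteq\mathbb{R}_{>0}$ is $\mu_e(E)=\inf_S \nu(S)$, the infimum over all covers $S$ of $E$. A set $E\subseteq\mathbb{R}_{>0}$ is $\mu$-measurable if for every $\epsilon>0$ there is an open set $G\subseteq\mathbb{R}_{>0}$ with $E\subseteq G$ and $\mu_e(G\setminus E)<1+\epsilon$; for such $E$, $\mu(E):=\mu_e(E)$, and $\mathcal{M}$ denotes the collection of $\mu$-measurable sets. *)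

From HB Require Import structures.
From mathcomp Require Import all_boot all_order all_algebra.
From mathcomp Require Import all_classical all_reals all_analysis.
Set Implicit Arguments. Unset Strict Implicit. Unset Printing Implicit Defensive.
Import Order.TTheory GRing.Theory Num.Theory.
Import numFieldNormedType.Exports.
Local Open Scope classical_set_scope.
Local Open Scope ring_scope.

Section mult_measure.
Context {R : realType}.

(* A closed interval [a,b] with 0 < a < b < oo is encoded by the pair (a,b).
   A cover of E is a countable set S of such pairs whose intervals cover E. *)
Definition is_cover (E : set R) (S : set (R * R)) : Prop :=
  [/\ countable S,
      (forall p, S p -> 0 < p.1 /\ p.1 < p.2) &
      E `<=` \bigcup_(p in S) [set` `[p.1, p.2]]].

(* nu(S) = prod_{I in S} l(I), l([a,b]) = b/a, defined as the supremum of the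
   finite partial products (product over finite, duplicate-free lists of
   elements of S). *)
Definition nu (S : set (R * R)) : \bar R :=
  ereal_sup [set (\prod_(p <- s) (p.2 / p.1))%:E
            | s in [set s : seq (R * R) | uniq s /\ (forall p, p \in s -> S p)]].

Definition mu_e (E : set R) : \bar R :=
  ereal_inf [set nu S | S in is_cover E].

(* mu-measurable subsets of R_{>0}; open subsets of R_{>0} (subspace
   topology) are exactly the open subsets of R contained in R_{>0}. *)
Definition mu_measurable (E : set R) : Prop :=
  E `<=` [set` `]0, +oo[] /\
  forall eps : R, 0 < eps ->
    exists G : set R, [/\ open G, G `<=` [set` `]0, +oo[], E `<=` G &
      (mu_e (G `\` E) < (1 + eps)%:E)%E].

(* Lebesgue measurable sets: the Caratheodory sigma-algebra of the Lebesgue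
   outer measure, i.e. the domain of the completed Lebesgue measure. *)
Definition lebesgue_measurable (E : set R) : Prop :=
  ((@wlength R idfun)^*)%mu.-cara.-measurable E.

End mult_measure.

From HB Require Import structures.
From mathcomp Require Import all_boot all_order all_algebra.
From mathcomp Require Import all_classical all_reals all_analysis.
From mathcomp Require Import measurable_realfun lra.
Import Order.TTheory GRing.Theory Num.Theory.
Import numFieldNormedType.Exports.
Local Open Scope classical_set_scope.
Local Open Scope ring_scope.

(* The multiplicative measure mu is exp o logm, where logm(A) = \int_A dx/x
   is a measure on the completed Lebesgue sigma-algebra.

   Conversely, a mu-measurable E differs from
      a G_delta set by a subset of a logm-null, hence Lebesgue-null, set, so
      E is Lebesgue measurable by completeness. *)

Lemma countable_exhaustion {T : pointedType} {S : set T} : countable S ->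
  exists s : nat -> seq T, [/\ forall n, uniq (s n),
    forall n p, p \in s n -> S p,
    forall n m p, (n <= m)%N -> p \in s n -> p \in s m &
    forall p, S p -> exists n, p \in s n].
Proof.
move=> cS; have /pcard_surjP[g gS] := cS.
pose s n := undup [seq g k | k <- iota 0 n & `[< S (g k) >]].
have mems n p : p \in s n <-> exists2 k, (k < n)%N & S (g k) /\ g k = p.
  rewrite mem_undup; split.
    by case/mapP => k; rewrite mem_filter mem_iota => /andP[/asboolP Sgk /andP[_ kn]] ->; exists k.
  move=> [k kn [Sgk <-]]; apply: map_f.
  by rewrite mem_filter mem_iota leq0n add0n kn !andbT; apply/asboolP.
exists s; split.
- by move=> n; exact: undup_uniq.
- by move=> n p /mems[k _ [Sgk <-]].
- move=> n m p nm /mems[k kn Hk]; apply/mems; exists k => //.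
  exact: leq_trans kn nm.
- move=> p Sp; have [k _ gkp] := gS p Sp.
  by exists k.+1; apply/mems; exists k => //; rewrite gkp.
Qed.

Section finite_unions.
Context {d} {T : measurableType d} {R : realType} (m : {measure set T -> \bar R}).
Local Open Scope ereal_scope.

Lemma measure_bigsetU_seq_le {I : Type} (F : I -> set T) (s : seq I) :
  (forall i, measurable (F i)) ->
  m (\big[setU/set0]_(i <- s) F i) <= \sum_(i <- s) m (F i).
Proof.
move=> mF; elim: s => [|i s IH]; first by rewrite !big_nil measure0.
rewrite !big_cons; apply: le_trans (leeD2l _ IH).
by apply: measureU2 => //; exact: bigsetU_measurable.
Qed.

Lemma measure_bigsetU_seq {I : eqType} (F : I -> set T) (s : seq I) :
  (forall i, measurable (F i)) -> uniq s ->
  {in s &, forall i j, i != j -> F i `&` F j = set0} ->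
  m (\big[setU/set0]_(i <- s) F i) = \sum_(i <- s) m (F i).
Proof.
move=> mF; elim: s => [|i s IH]; first by rewrite !big_nil measure0.
move=> /= /andP[iNs us] dis; rewrite !big_cons measureU//; last 2 first.
- exact: bigsetU_measurable.
- rewrite big_distrr/= big_seq big1// => j js.
  apply: dis; rewrite ?inE ?eqxx ?js ?orbT//.
  by move: iNs; apply: contraNneq => ->.
congr (_ + _); apply: IH => // j k js ks.
by apply: dis; rewrite inE ?js ?ks orbT.
Qed.

End finite_unions.

Section intervals.
Context {R : realType}.

Lemma open_interval_bounds {J : set R} : open J -> is_interval J -> J !=set0 ->
  has_sup J -> has_inf J ->
  [/\ inf J < sup J, J `<=` `[inf J, sup J]%classic & `]inf J, sup J[%classic `<=` J].
Proof.
move=> oJ iJ [x0 Jx0] hs hi.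
have [e e0 ballJ] : exists2 e : R, 0 < e & ball x0 e `<=` J.
  have : nbhs x0 J by rewrite nbhsE/=; exists J.
  by move/nbhs_ballP => [e e0 H]; exists e.
have Jx1 : J (x0 + e / 2).
  apply: ballJ; rewrite /ball/= opprD addrA subrr sub0r normrN ger0_norm.
    by rewrite ltr_pdivrMr// ltr_pMr// ltr1n.
  by rewrite divr_ge0// ltW.
split.
- apply: (le_lt_trans (ge_inf hi.2 Jx0)).
  apply: (lt_le_trans _ (sup_upper_bound hs Jx1)).
  by rewrite ltrDl divr_gt0.
- by move=> y Jy; rewrite /= in_itv/= ge_inf ?sup_upper_bound//; exact: hi.2.
- move=> y; rewrite /= in_itv/= => /andP[iy ys].
  have gap_inf : 0 < y - inf J by rewrite subr_gt0.
  have gap_sup : 0 < sup J - y by rewrite subr_gt0.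
  have [z Jz zy] := inf_adherent gap_inf hi.
  have [w Jw yw] := sup_adherent gap_sup hs.
  apply: (iJ z w Jz Jw); apply/andP; split.
    by apply: ltW; move: zy; rewrite addrC subrK.
  by apply: ltW; move: yw; rewrite opprB addrC subrK.
Qed.

Lemma ln_bounded_interval {J : set R} {K : R} : 0 <= K ->
  J `<=` `]0, +oo[%classic -> J !=set0 ->
  (forall x y, J x -> J y -> x < y -> ln y - ln x <= K) ->
  [/\ has_sup J, has_inf J & 0 < inf J].
Proof.
move=> K0 Jpos [x0 Jx0] osc.
have pos y : J y -> 0 < y by move=> /Jpos; rewrite /= in_itv/= andbT.
have x0p := pos _ Jx0.
have expK_ge1 : 1 <= expR K by rewrite -expR0 ler_expR.
have ub : ubound J (x0 * expR K).
  move=> y Jy; have [yx0|x0y] := leP y x0.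
    by rewrite (le_trans yx0)// ler_peMr// ltW.
  have := osc _ _ Jx0 Jy x0y => h.
  by rewrite -[y]lnK ?posrE ?pos// -[x0 in x0 * _]lnK ?posrE// -expRD ler_expR; lra.
have lb : lbound J (x0 * expR (- K)).
  move=> y Jy; have [yx0|x0y] := leP x0 y.
    by rewrite (le_trans _ yx0)// ger_pMr// -expR0 ler_expR oppr_le0.
  have := osc _ _ Jy Jx0 x0y => h.
  by rewrite -[y]lnK ?posrE ?pos// -[x0 in x0 * _]lnK ?posrE// -expRD ler_expR; lra.
have hi : has_inf J by split; [exists x0|exists (x0 * expR (- K))].
split => //; first by split; [exists x0|exists (x0 * expR K)].
apply: (lt_le_trans _ (lb_le_inf _ lb)); last by exists x0.
by rewrite mulr_gt0// expR_gt0.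
Qed.

Lemma pos_in_annulus (x : R) : (0 < x)%R ->
  exists k : nat, ((k.+1%:R)^-1 < x < k.+1%:R)%R.
Proof.
move=> x0; pose k := Num.bound (x + x^-1)%R.
have ix0 : (0 < x^-1)%R by rewrite invr_gt0.
have hk : (x + x^-1 < k%:R)%R by apply: archi_boundP; rewrite addr_ge0// ltW.
have hk1 : (k%:R < k.+1%:R :> R)%R by rewrite ltr_nat.
exists k; apply/andP; split; last by lra.
by rewrite -[x in (_ < x)%R]invrK ltf_pV2 ?posrE//; lra.
Qed.

End intervals.

(* The completed Lebesgue sigma-algebra on R: its measurable sets are the
   sets called [lebesgue_measurable] in the statement. *)
Definition lebesgueR (R : realType) : measurableType _ :=
  caratheodory_type (R:=R) (wlength (@idfun R))^*%mu.

Section log_measure.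
Context {R : realType}.

Local Notation lambda := (@completed_lebesgue_measure R).

Lemma borel_lebesgueR (A : set (measurableTypeR R)) :
  measurable A -> measurable (A : set (lebesgueR R)).
Proof. exact: sub_caratheodory. Qed.

Lemma measurable_id_lebesgueR :
  measurable_fun [set: lebesgueR R] (fun x : lebesgueR R => x : measurableTypeR R).
Proof. by move=> _ B mB; rewrite setTI; exact: borel_lebesgueR. Qed.

Definition inv_density (x : R) : \bar R := if 0 < x then (x^-1)%:E else 0%E.

Lemma inv_density_ge0 (x : R) : (0 <= inv_density x)%E.
Proof. by rewrite /inv_density; case: ifPn => // x0; rewrite lee_fin invr_ge0 ltW. Qed.

Lemma measurable_inv_density : measurable_fun [set: measurableTypeR R] inv_density.
Proof.
apply: measurable_fun_if => //.
- by apply: (@measurable_fun_ltr _ _ _ _ (cst 0) idfun) => //; exact: measurable_id.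
- rewrite setTI.
  have -> : (fun x : R => 0 < x) @^-1` [set true] = `]0, +oo[%classic.
    by apply/seteqP; split => x /=; rewrite in_itv/= andbT.
  apply/measurable_EFinP.
  apply: open_continuous_measurable_fun; first exact: interval_open.
  move=> x; rewrite inE/= in_itv/= andbT => x0.
  by apply: inv_continuous; rewrite gt_eqF.
Qed.

Lemma measurable_inv_density_lebesgueR : measurable_fun [set: lebesgueR R] inv_density.
Proof. exact: measurableT_comp measurable_inv_density measurable_id_lebesgueR. Qed.

Definition logm (A : set (lebesgueR R)) : \bar R := (\int[lambda]_(x in A) inv_density x)%E.

Let logm0 : logm set0 = 0%E.
Proof. exact: integral_set0. Qed.

Let logm_ge0 (A : set (lebesgueR R)) : (0 <= logm A)%E.
Proof. by apply: integral_ge0 => x _; exact: inv_density_ge0. Qed.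

Let logm_sigma_additive : semi_sigma_additive logm.
Proof.
exact: semi_sigma_additive_nng_induced measurable_inv_density_lebesgueR inv_density_ge0.
Qed.

HB.instance Definition _ :=
  isMeasure.Build _ _ _ logm logm0 logm_ge0 logm_sigma_additive.

Local Open Scope ereal_scope.

Lemma logm_borel {D : set (measurableTypeR R)} : measurable D ->
  logm D = \int[lebesgue_measure]_(x in D) inv_density x.
Proof.
move=> mD; have mf : measurable_fun D inv_density.
  exact: measurable_funS measurableT (subsetT _) measurable_inv_density.
by rewrite (ge0_integral_pushforward measurable_id_lebesgueR lambda mD mf)//
  => y _; exact: inv_density_ge0.
Qed.

Lemma logm_itv_cc (a b : R) : (0 < a)%R -> (a < b)%R ->
  logm `[a, b] = (ln b - ln a)%:E.
Proof.
move=> a0 ab; rewrite (logm_borel (measurable_itv `[a, b]%R)).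
transitivity (\int[lebesgue_measure]_(x in `[a, b]) (x^-1)%:E).
  apply: eq_integral => x; rewrite inE/= in_itv/= => /andP[ax _].
  by rewrite /inv_density (lt_le_trans a0 ax).
have ln_derivable x : (a <= x)%R -> is_derive x 1%R (@ln R) (x^-1)%R.
  by move=> ax; apply: is_derive1_ln; exact: lt_le_trans ax.
rewrite (@continuous_FTC2 _ GRing.inv (@ln R)) ?EFinB//.
- apply: continuous_in_subspaceT => x; rewrite inE/= in_itv/= => /andP[ax _].
  by apply: inv_continuous; rewrite gt_eqF// (lt_le_trans a0 ax).
- split.
  + by move=> x; rewrite in_itv/= => /andP[/ltW ax _]; apply: ex_derive; exact: ln_derivable.
  + by apply: cvg_at_right_filter; apply: continuous_ln.
  + by apply: cvg_at_left_filter; apply: continuous_ln; rewrite (lt_trans a0 ab).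
- move=> x; rewrite in_itv/= => /andP[/ltW ax _].
  by rewrite derive1E; apply: derive_val; exact: ln_derivable.
Qed.

Lemma logm_itv_oo (a b : R) : (0 < a)%R -> (a < b)%R ->
  logm `]a, b[ = (ln b - ln a)%:E.
Proof.
move=> a0 ab; rewrite -logm_itv_cc// !logm_borel//.
have mf (i : interval R) : measurable_fun [set` i] inv_density.
  exact: measurable_funS measurableT (subsetT _) measurable_inv_density.
by rewrite integral_itv_bndo_bndc ?integral_itv_obnd_cbnd.
Qed.

(* Comparison with Lebesgue measure: 1/x <= 1/c on [c, +oo[ ... *)
Lemma logm_le_lambda (A : set (lebesgueR R)) (c : R) : measurable A -> (0 < c)%R ->
  A `<=` `[c, +oo[%classic -> logm A <= (c^-1)%:E * lambda A.
Proof.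
move=> mA c0 Ac; rewrite -integral_cst//; apply: ge0_le_integral => //.
- by move=> x _; exact: inv_density_ge0.
- exact: measurable_funS measurableT (subsetT _) measurable_inv_density_lebesgueR.
- move=> x /Ac; rewrite /= in_itv/= andbT => cx.
  by rewrite /inv_density (lt_le_trans c0 cx) lee_fin lef_pV2// posrE (lt_le_trans c0 cx).
Qed.

(* ... and 1/x >= 1/c on ]0, c]. *)
Lemma lambda_le_logm (A : set (lebesgueR R)) (c : R) : measurable A -> (0 < c)%R ->
  A `<=` `]0%R, c]%classic -> (c^-1)%:E * lambda A <= logm A.
Proof.
move=> mA c0 Ac; rewrite -integral_cst//; apply: ge0_le_integral => //.
- by move=> x _; rewrite lee_fin invr_ge0 ltW.
- exact: measurable_funS measurableT (subsetT _) measurable_inv_density_lebesgueR.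
- move=> x /Ac; rewrite /= in_itv/= => /andP[x0 xc].
  by rewrite /inv_density x0 lee_fin lef_pV2// posrE.
Qed.

(* A logm-null subset of R_{>0} is Lebesgue-null: cut it into the pieces
   lying in ]0, k+1], where logm dominates lambda/(k+1). *)
Lemma logm_null_lambda_null (N : set (lebesgueR R)) : measurable N ->
  N `<=` `]0%R, +oo[%classic -> logm N = 0 -> lambda N = 0.
Proof.
move=> mN Npos N0.
pose N_ (k : nat) : set (lebesgueR R) := N `&` `]0%R, k.+1%:R]%classic.
have mN_ k : measurable (N_ k).
  by apply: measurableI => //; exact: borel_lebesgueR (measurable_itv _).
have N_0 k : lambda (N_ k) = 0.
  have k0 : (0 < k.+1%:R :> R)%R by rewrite ltr0Sn.
  have := @lambda_le_logm (N_ k) _ (mN_ k) k0 (@subIsetr _ _ _).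
  have : logm (N_ k) <= logm N by rewrite le_measure ?inE//; exact: subIsetl.
  rewrite N0 => le1 /le_trans /(_ le1).
  by rewrite pmule_rle0 ?lee_fin ?invr_gt0// measure_le0 => /eqP.
have NE : N `<=` \bigcup_k N_ k.
  move=> x Nx; have := Npos x Nx; rewrite /= in_itv/= andbT => x0.
  exists (Num.bound x) => //; split => //; rewrite /= in_itv/= x0/=.
  by apply/ltW/(lt_trans (archi_boundP (ltW x0))); rewrite ltr_nat.
apply/eqP; rewrite -measure_le0.
apply: (le_trans (measure_sigma_subadditive _ mN_ mN NE)).
by rewrite eseries0// => k _ _; exact: N_0.
Qed.

End log_measure.

Section outer_regularity.
Context {R : realType}.
Local Notation lambda := (@completed_lebesgue_measure R).
Local Open Scope ereal_scope.

Lemma lambda_itv_oo_fin (a b : R) : lambda `]a, b[%classic < +oo.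
Proof.
rewrite (_ : lambda _ = lebesgue_measure `]a, b[%classic)//.
by rewrite lebesgue_measure_itv/=; case: ifP => _; rewrite -?EFinB ltry.
Qed.

(* Outer regularity of logm for sets inside a bounded interval ]c, b[ with
   c > 0: there logm <= lambda / c, so it follows from outer regularity of
   Lebesgue measure. *)
Lemma open_approx_bounded (A : set (lebesgueR R)) (c b e : R) :
  measurable A -> (0 < c)%R -> (0 < e)%R -> A `<=` `]c, b[%classic ->
  exists V : set R, [/\ open V, V `<=` `]c, b[%classic, A `<=` V &
    logm (V `\` A) <= e%:E].
Proof.
move=> mA c0 e0 Acb.
have [U [oU AU UA]] := outer_measure_open_le A (mulr_gt0 c0 e0).
have mcb : measurable (`]c, b[%classic : set (lebesgueR R)).
  exact: borel_lebesgueR (measurable_itv _).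
have mU : measurable (U : set (lebesgueR R)) by exact: borel_lebesgueR (open_measurable oU).
have lambdaA_fin : lambda A \is a fin_num.
  rewrite ge0_fin_numE//; apply: (@le_lt_trans _ _ (lambda `]c, b[%classic)).
    by rewrite le_measure ?inE.
  exact: lambda_itv_oo_fin.
set V := U `&` `]c, b[%classic.
have mV : measurable (V : set (lebesgueR R)) := measurableI _ _ mU mcb.
have AV : A `<=` V by move=> x Ax; split; [exact: AU|exact: Acb].
exists V; split => //; first exact: openI oU (interval_open _ _).
  exact: subIsetr.
have lambda_diff : lambda (V `\` A) <= (c * e)%:E.
  have lambdaV_fin : lambda V < +oo.
    apply: le_lt_trans (lambda_itv_oo_fin c b).
    by rewrite le_measure ?inE//; exact: subIsetr.
  rewrite measureD// (setIidr AV) leeBlDl// (le_trans _ UA)//.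
  by rewrite le_measure ?inE//; exact: subIsetl.
have sub : V `\` A `<=` `[c, +oo[%classic.
  by move=> x [[_]]; rewrite /= !in_itv/= andbT => /andP[/ltW].
apply: (le_trans (logm_le_lambda _ _ (measurableD mV mA) c0 sub)).
by rewrite -lee_pdivlMl ?invr_gt0// invrK -EFinM.
Qed.

(* Outer regularity of logm on R_{>0}: approximate E on each annulus with
   error d / 2^(k+1) and sum the errors. *)
Lemma open_approx (E : set (lebesgueR R)) (d : R) : measurable E ->
  E `<=` `]0%R, +oo[%classic -> (0 < d)%R ->
  exists G : set R, [/\ open G, G `<=` `]0%R, +oo[%classic, E `<=` G &
    logm (G `\` E) <= d%:E].
Proof.
move=> mE Epos d0.
pose P (k : nat) : set R := `]((k.+1%:R)^-1)%R, k.+1%:R[%classic.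
have mP k : measurable (P k : set (lebesgueR R)) by exact: borel_lebesgueR (measurable_itv _).
have approx k : exists V : set R, [/\ open V, V `<=` P k, E `&` P k `<=` V &
    logm (V `\` (E `&` P k)) <= (d / (2 ^ k.+1)%:R)%:E].
  apply: open_approx_bounded; first exact: measurableI.
  - by rewrite invr_gt0.
  - by rewrite divr_gt0.
  - exact: subIsetr.
have [V HV] := choice approx.
have mV k : measurable (V k : set (lebesgueR R)).
  by have [oV _ _ _] := HV k; exact: borel_lebesgueR (open_measurable oV).
exists (\bigcup_k V k); split.
- by apply: bigcup_open => k _; have [] := HV k.
- move=> x [k _ Vx]; have [_ /(_ x Vx) + _ _] := HV k.
  rewrite /= !in_itv/= andbT => /andP[+ _].
  by apply: lt_trans; rewrite invr_gt0.
- move=> x Ex; have := Epos x Ex; rewrite /= in_itv/= andbT.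
  move=> /pos_in_annulus[k xk]; have [_ _ EV _] := HV k.
  by exists k => //; apply: EV; split => //; rewrite /P/= in_itv.
- pose F k : set (lebesgueR R) := V k `\` (E `&` P k).
  have mF k : measurable (F k) by apply: measurableD => //; exact: measurableI.
  have GE : (\bigcup_k V k) `\` E `<=` \bigcup_k F k.
    by move=> x [[k _ Vx] nE]; exists k => //; split => // -[].
  apply: (le_trans (measure_sigma_subadditive _ mF _ GE)).
    by apply: measurableD => //; exact: bigcupT_measurable.
  apply: (le_trans (lee_nneseries _ _)).
  + by move=> k _ _; exact: measure_ge0.
  + by move=> k _; have [_ _ _ VE] := HV k; exact: VE.
  exact: epsilon_trick0 (ltW d0).
Qed.

End outer_regularity.

Section cover_lower_bound.
Context {R : realType}.
Local Open Scope ereal_scope.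

Lemma prod_le_nu (S : set (R * R)) (s : seq (R * R)) :
  uniq s -> (forall p, p \in s -> S p) -> (\prod_(p <- s) (p.2 / p.1))%:E <= nu S.
Proof. by move=> us sS; apply: ereal_sup_ubound; exists s. Qed.

Lemma nu_ge1 (S : set (R * R)) : 1 <= nu S.
Proof. by have := @prod_le_nu S [::] erefl; rewrite big_nil; apply => p; rewrite in_nil. Qed.

Lemma sum_logm_itv_cc (s : seq (R * R)) :
  (forall p, p \in s -> (0 < p.1)%R /\ (p.1 < p.2)%R) ->
  (0 < \prod_(p <- s) (p.2 / p.1))%R /\
  \sum_(p <- s) logm `[p.1, p.2]%classic = (ln (\prod_(p <- s) (p.2 / p.1)))%:E.
Proof.
elim: s => [|p s IH] spos; first by rewrite !big_nil ln1.
have [p0 p12] := spos p (mem_head _ _).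
have spos' q : q \in s -> (0 < q.1)%R /\ (q.1 < q.2)%R.
  by move=> qs; apply: spos; rewrite in_cons qs orbT.
have [prod_gt0 sumE] := IH spos'.
have ratio_gt0 : (0 < p.2 / p.1)%R by rewrite divr_gt0// (lt_trans p0 p12).
rewrite !big_cons sumE logm_itv_cc// lnM ?posrE// ln_div ?posrE ?(lt_trans p0 p12)//.
by split; [exact: mulr_gt0|rewrite EFinD].
Qed.

Lemma logm_finite_cover_le {S : set (R * R)} {s : seq (R * R)} :
  (forall p, S p -> (0 < p.1)%R /\ (p.1 < p.2)%R) ->
  uniq s -> (forall p, p \in s -> S p) ->
  logm (\big[setU/set0]_(p <- s) (`[p.1, p.2]%classic : set (lebesgueR R))) <= lne (nu S).
Proof.
move=> Spos us sS.
have [prod_gt0 sumE] := sum_logm_itv_cc s (fun p ps => Spos p (sS p ps)).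
apply: (le_trans (measure_bigsetU_seq_le logm _ s _)).
  by move=> p; exact: borel_lebesgueR (measurable_itv _).
rewrite sumE -lne_EFin// lee_lne ?prod_le_nu//.
- by rewrite in_itv/= leey andbT lee_fin ltW.
- by rewrite in_itv/= leey andbT (le_trans _ (nu_ge1 S)).
Qed.

(* Countable subadditivity: the union B of the intervals of a cover of A is
   a Lebesgue set containing A with exp (logm B) <= nu S. *)
Lemma cover_lower_bound {A : set R} {S : set (R * R)} : is_cover A S ->
  exists B : set R, [/\ measurable (B : set (lebesgueR R)),
    B `<=` `]0%R, +oo[%classic, A `<=` B & expeR (logm B) <= nu S].
Proof.
case=> cS Spos AS.
pose I (p : R * R) : set (lebesgueR R) := `[p.1, p.2]%classic.
have mI p : measurable (I p) by exact: borel_lebesgueR (measurable_itv _).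
have [s [us sS s_mono s_cover]] := countable_exhaustion cS.
pose B n := \big[setU/set0]_(p <- s n) I p.
have mB n : measurable (B n) by exact: bigsetU_measurable.
have BE : \bigcup_(p in S) I p = \bigcup_n B n.
  apply/seteqP; split => x.
    move=> [p Sp Ipx]; have [n pn] := s_cover p Sp.
    by exists n => //; rewrite /B -bigcup_seq; exists p.
  by move=> [n _]; rewrite /B -bigcup_seq => -[p /sS Sp Ipx]; exists p.
have B_nd : nondecreasing_seq B.
  move=> n k nk; apply/subsetPset; rewrite /B -!bigcup_seq => x [p pn Ipx].
  by exists p => //; exact: s_mono pn.
exists (\bigcup_(p in S) I p); split => //.
- by rewrite BE; exact: bigcupT_measurable.
- move=> x [p Sp]; rewrite /I/= !in_itv/= andbT => /andP[px _].
  by have [p0 _] := Spos p Sp; exact: lt_le_trans px.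
have B_cvg := @nondecreasing_cvg_mu _ _ _ logm _ mB (bigcupT_measurable _ mB) B_nd.
have : logm (\bigcup_n B n) <= lne (nu S).
  rewrite -(cvg_lim _ B_cvg)//; apply: lime_le; first by apply/cvg_ex; eexists; exact: B_cvg.
  by apply: nearW => n /=; exact: logm_finite_cover_le Spos (us n) (sS n).
have nuS_ge0 : nu S \in `[0, +oo] by rewrite in_itv/= leey andbT (le_trans _ (nu_ge1 S)).
by rewrite -BE => logmB_le; rewrite -[leRHS]lneK// lee_expeR.
Qed.

End cover_lower_bound.

Section cover_upper_bound.
Context {R : realType}.
Local Open Scope ereal_scope.

(* A nonempty open interval J inside a set G of R_{>0} of finite
   logm-measure is, up to endpoints, ]inf J, sup J[ with 0 < inf J: the
   oscillation of ln on J is bounded by logm G. *)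
Lemma interval_in_finite_logm {G : set (lebesgueR R)} {J : set R} :
  measurable G -> G `<=` `]0%R, +oo[%classic -> logm G < +oo ->
  open J -> is_interval J -> J !=set0 -> J `<=` G ->
  [/\ (0 < inf J)%R, (inf J < sup J)%R,
      J `<=` `[inf J, sup J]%classic & `]inf J, sup J[%classic `<=` J].
Proof.
move=> mG Gpos Gfin oJ iJ Jne JG.
set K := fine (logm G).
have GK : logm G = K%:E by rewrite fineK// ge0_fin_numE.
have osc x y : J x -> J y -> (x < y)%R -> (ln y - ln x <= K)%R.
  move=> Jx Jy xy; have x0 : (0 < x)%R.
    by have := Gpos x (JG x Jx); rewrite /= in_itv/= andbT.
  rewrite -lee_fin -GK -logm_itv_oo// le_measure ?inE//.
    exact: borel_lebesgueR (measurable_itv _).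
  move=> z; rewrite /= in_itv/= => /andP[xz zy]; apply: JG.
  by apply: (iJ x y Jx Jy); rewrite !ltW.
have K0 : (0 <= K)%R by rewrite fine_ge0.
have [hs hi inf_gt0] := ln_bounded_interval K0 (subset_trans JG Gpos) Jne osc.
by have [] := open_interval_bounds oJ iJ Jne hs hi.
Qed.

(* The connected components of an open set G of finite logm-measure in
   R_{>0} are the interiors of a countable family of intervals [a, b],
   0 < a < b, which covers G and whose interiors are disjoint and lie in G. *)
Lemma open_components_cover (G : set R) : open G ->
  G `<=` `]0%R, +oo[%classic -> logm (G : set (lebesgueR R)) < +oo ->
  exists S : set (R * R), [/\ countable S,
    forall p, S p -> (0 < p.1)%R /\ (p.1 < p.2)%R,
    G `<=` \bigcup_(p in S) `[p.1, p.2]%classic,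
    forall p, S p -> `]p.1, p.2[%classic `<=` G &
    forall p q, S p -> S q -> p != q -> `]p.1, p.2[ `&` `]q.1, q.2[ = set0].
Proof.
move=> oG Gpos Gfin.
have mG : measurable (G : set (lebesgueR R)) by exact: borel_lebesgueR (open_measurable oG).
pose J := open_disjoint_itv oG.
have JG q : J q `<=` G.
  by rewrite [X in _ `<=` X](open_disjoint_itv_bigcup oG) => x Jx; exists q.
pose a q := inf (J q); pose b q := sup (J q).
have Jab q : J q !=set0 -> [/\ (0 < a q)%R, (a q < b q)%R,
    J q `<=` `[a q, b q]%classic & `]a q, b q[%classic `<=` J q].
  move=> Jne; apply: interval_in_finite_logm mG Gpos Gfin _ _ Jne (JG q).
  - exact: open_disjoint_itv_open.
  - exact: open_disjoint_itv_is_interval.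
pose Q := [set q | J q !=set0].
exists ((fun q => (a q, b q)) @` Q); split.
- by apply: sub_countable (card_image_le _ _) _; exact: countableP.
- by move=> _ [q Qq <-] /=; have [] := Jab q Qq.
- move=> x Gx; have := Gx; rewrite [X in X x -> _](open_disjoint_itv_bigcup oG).
  move=> [q _ Jqx]; have Qq : Q q by exists x.
  by exists (a q, b q); [exists q|have [_ _ + _] := Jab q Qq; apply].
- by move=> _ [q Qq <-] /=; have [_ _ _ /subset_trans] := Jab q Qq; apply.
- move=> _ _ [q1 Q1 <-] [q2 Q2 <-] pq; apply/seteqP; split => // x [/= x1 x2].
  have [_ _ _ sub1] := Jab q1 Q1; have [_ _ _ sub2] := Jab q2 Q2.
  have q12 : q1 = q2.
    apply: (@open_disjoint_itv_trivIset _ _ oG) => //.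
    by exists x; split; [exact: sub1|exact: sub2].
  by move: pq; rewrite q12 eqxx.
Qed.

Lemma nu_le_disjoint {G : set (lebesgueR R)} {S : set (R * R)} : measurable G ->
  (forall p, S p -> (0 < p.1)%R /\ (p.1 < p.2)%R) ->
  (forall p, S p -> `]p.1, p.2[%classic `<=` G) ->
  (forall p q, S p -> S q -> p != q -> `]p.1, p.2[ `&` `]q.1, q.2[ = set0) ->
  nu S <= expeR (logm G).
Proof.
move=> mG Spos SG Sdisj; apply: ge_ereal_sup => _ [s [us sS] <-].
pose F (p : R * R) : set (lebesgueR R) := `]p.1, p.2[%classic.
have mF p : measurable (F p) by exact: borel_lebesgueR (measurable_itv _).
have [prod_gt0 sumE] := sum_logm_itv_cc s (fun p ps => Spos p (sS p ps)).
have sum_oo : \sum_(p <- s) logm (F p) = \sum_(p <- s) logm `[p.1, p.2]%classic.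
  apply: eq_big_seq => p ps; have [p0 p12] := Spos p (sS p ps).
  by rewrite logm_itv_oo ?logm_itv_cc.
have disjF : {in s &, forall p q, p != q -> F p `&` F q = set0}.
  by move=> p q ps qs; apply: Sdisj; exact: sS.
have : logm (\big[setU/set0]_(p <- s) F p) <= logm G.
  rewrite le_measure ?inE//; first exact: bigsetU_measurable.
  by rewrite -bigcup_seq => x [p /= ps]; apply: SG; exact: sS.
rewrite measure_bigsetU_seq// sum_oo sumE -lee_expeR /= lnK// posrE//.
Qed.

(* Conversely to [cover_lower_bound]: a Lebesgue set E of finite
   logm-measure has covers S with nu S as close to exp (logm E) as wanted,
   namely the components of an open approximation of E. *)
Lemma cover_upper_bound (E : set (lebesgueR R)) (d : R) : measurable E ->
  E `<=` `]0%R, +oo[%classic -> logm E < +oo -> (0 < d)%R ->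
  exists S, is_cover E S /\ nu S <= expeR (logm E + d%:E).
Proof.
move=> mE Epos Efin d0.
have [G [oG Gpos EG GE]] := open_approx E d mE Epos d0.
have mG : measurable (G : set (lebesgueR R)) by exact: borel_lebesgueR (open_measurable oG).
have logmG : logm (G : set (lebesgueR R)) <= logm E + d%:E.
  rewrite -(setDUK EG) measureU//; first by rewrite leeD2l.
  - exact: measurableD.
  - exact: setDIK.
have Gfin : logm (G : set (lebesgueR R)) < +oo.
  by apply: le_lt_trans logmG _; rewrite lte_add_pinfty// ltry.
have [S [cS Spos GS SG Sdisj]] := open_components_cover G oG Gpos Gfin.
exists S; split; first by split => //; exact: subset_trans GS.
by apply: le_trans (nu_le_disjoint mG Spos SG Sdisj) _; rewrite lee_expeR.
Qed.

End cover_upper_bound.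

Section multiplicative_measure.
Context {R : realType}.
Local Notation lambda := (@completed_lebesgue_measure R).
Local Open Scope ereal_scope.

Lemma logm_pos (E : set (lebesgueR R)) : E `<=` `]0%R, +oo[%classic ->
  logm E = \int[lambda]_(x in E) (x^-1)%:E.
Proof.
move=> Epos; apply: eq_integral => x; rewrite inE => Ex.
by have := Epos x Ex; rewrite /= in_itv/= andbT /inv_density => ->.
Qed.

Lemma mu_e_lebesgue (E : set (lebesgueR R)) : measurable E ->
  E `<=` `]0%R, +oo[%classic -> mu_e E = expeR (logm E).
Proof.
move=> mE Epos; apply/eqP; rewrite eq_le; apply/andP; split; last first.
  apply: le_ereal_inf_tmp => _ [S ES <-].
  have [B [mB _ EB BS]] := cover_lower_bound ES.
  by apply: le_trans BS; rewrite lee_expeR le_measure ?inE.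
have [->|Enoo] := eqVneq (logm E) +oo; first by rewrite leey.
have Efin : logm E < +oo by rewrite ltey.
have [x xE] : exists x, logm E = x%:E.
  by exists (fine (logm E)); rewrite fineK// ge0_fin_numE.
rewrite xE /=; apply/lee_addgt0Pr => e e0.
have ratio_gt0 : (0 < e * expR (- x))%R by rewrite mulr_gt0// expR_gt0.
pose d := ln (1 + e * expR (- x)).
have d0 : (0 < d)%R by rewrite ln_gt0// ltrDl.
have [S [ES nuS]] := cover_upper_bound E d mE Epos Efin d0.
apply: (@le_trans _ _ (nu S)); first by apply: ereal_inf_lbound; exists S.
apply: (le_trans nuS); rewrite xE -EFinD /= lee_fin expRD lnK ?posrE ?addr_gt0//.
by rewrite mulrDr mulr1 expRN mulrCA divff ?mulr1// gt_eqF// expR_gt0.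
Qed.

(* Lebesgue sets of R_{>0} are mu-measurable: approximate E from outside by
   an open G with logm (G \ E) < ln (1 + eps) and apply [mu_e_lebesgue]. *)
Lemma lebesgue_mu_measurable (E : set (lebesgueR R)) : measurable E ->
  E `<=` `]0%R, +oo[%classic -> mu_measurable E.
Proof.
move=> mE Epos; split => // eps eps0.
have l0 : (0 < ln (1 + eps))%R by rewrite ln_gt0// ltrDl.
pose d := (ln (1 + eps) / 2)%R.
have d0 : (0 < d)%R by rewrite divr_gt0.
have [G [oG Gpos EG GE]] := open_approx E d mE Epos d0.
exists G; split => //.
have mGE : measurable (G `\` E : set (lebesgueR R)).
  by apply: measurableD => //; exact: borel_lebesgueR (open_measurable oG).
rewrite mu_e_lebesgue//; last by move=> x [/Gpos].
apply: (@le_lt_trans _ _ (expeR d%:E)); first by rewrite lee_expeR.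
rewrite /= lte_fin -[X in (_ < X)%R]lnK ?posrE ?addr_gt0// ltr_expR.
by rewrite /d ltr_pdivrMr// ltr_pMr// ltr1n.
Qed.

Lemma mu_measurable_approx {E : set R} {eps : R} : mu_measurable E -> (0 < eps)%R ->
  exists G B : set R, [/\ open G, E `<=` G, measurable (B : set (lebesgueR R)),
    B `<=` `]0%R, +oo[%classic & G `\` E `<=` B /\ logm (B : set (lebesgueR R)) <= eps%:E].
Proof.
move=> [_ Happrox] eps0.
have [G [oG _ EG GE]] := Happrox eps eps0.
have [_ [S cS <-] nuS] := ereal_inf_lt GE.
have [B [mB Bpos GEB BS]] := cover_lower_bound cS.
exists G, B; split => //; split => //.
have l1 : (0 < 1 + eps)%R by rewrite addr_gt0.
have : expeR (logm (B : set (lebesgueR R))) <= expeR (ln (1 + eps))%:E.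
  by rewrite /= lnK ?posrE//; exact/ltW/(le_lt_trans BS).
rewrite lee_expeR => /le_trans; apply.
by rewrite lee_fin le_ln1Dx// (lt_le_trans _ (ltW eps0))// ltrN10.
Qed.

(* mu-measurable sets are Lebesgue measurable: E differs from the G_delta
   set H = \bigcap_n G_n by a subset of the logm-null, hence Lebesgue-null,
   set N = \bigcap_n B_n, and Lebesgue measure is complete. *)
Lemma mu_measurable_lebesgue {E : set R} : mu_measurable E ->
  measurable (E : set (lebesgueR R)).
Proof.
move=> Emu.
have inv_gt0 n : (0 < (n.+1%:R)^-1 :> R)%R by rewrite invr_gt0.
have [G HG] := choice (fun n => mu_measurable_approx Emu (inv_gt0 n)).
have [B HB] := choice HG.
pose N := \bigcap_n (B n : set (lebesgueR R)).
have mN : measurable N by apply: bigcapT_measurable => n; have [] := HB n.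
have Npos : N `<=` `]0%R, +oo[%classic.
  by move=> x Nx; have [_ _ _ Bpos _] := HB 0%N; exact: Bpos (Nx 0%N I).
have logmN : logm N = 0.
  apply/eqP; rewrite -measure_le0; apply/lee_addgt0Pr => e e0; rewrite add0e.
  pose n := Num.bound e^-1.
  have hn : (e^-1 < n%:R)%R by apply: archi_boundP; rewrite invr_ge0 ltW.
  have [_ _ mBn _ [_ logmBn]] := HB n.
  apply: (le_trans _ (le_trans logmBn _)).
    by rewrite le_measure ?inE// => x Nx; exact: Nx n I.
  rewrite lee_fin -[X in (_ <= X)%R]invrK lef_pV2 ?posrE ?invr_gt0 ?ltr0Sn//.
  by rewrite (le_trans (ltW hn))// ler_nat.
pose H := \bigcap_n (G n : set (lebesgueR R)).
have mH : measurable H.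
  apply: bigcapT_measurable => n; have [oG _ _ _ _] := HB n.
  exact: borel_lebesgueR (open_measurable oG).
have EH : E `<=` H by move=> x Ex n _; have [_ EG _ _ _] := HB n; exact: EG.
have HE_N : H `\` E `<=` N.
  by move=> x [Hx nE] n _; have [_ _ _ _ [GEB _]] := HB n; apply: GEB; split => //; exact: Hx.
have mHE : measurable (H `\` E).
  apply: completed_lebesgue_measure_is_complete; exists N; split => //.
  exact: logm_null_lambda_null.
by rewrite -(setIidr EH) -setDD; exact: measurableD.
Qed.

End multiplicative_measure.

Theorem mainTheorem19 (R : realType) :
  (forall E : set R,
     mu_measurable E <-> (E `<=` [set` `]0, +oo[] /\ lebesgue_measurable E)) /\
  (forall E : set R, mu_measurable E ->
     mu_e E = expeR (\int[@completed_lebesgue_measure R]_(x in E) (x^-1)%:E)%E).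
Proof.
split => [E|E Emu]; first split.
- by move=> Emu; split; [exact: Emu.1|exact: mu_measurable_lebesgue].
- by move=> [Epos mE]; exact: lebesgue_mu_measurable.
have mE := mu_measurable_lebesgue Emu.
by rewrite mu_e_lebesgue ?logm_pos//; exact: Emu.1.
Qed.
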